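(* Let $q\ge2$. If $f$ is a $q$-quasiadditive function, then $f(0)=0$ and $f(qa)=f(a)$ for all nonnegative integers $a$. If $f$ is a $q$-quasimultiplicative function, then $f(0)=1$ unless $f$ is identically $0$, and $f(qa)=f(a)$ for all nonnegative integers $a$.
   Context: A function $f$ on the nonnegative integers is $q$-quasiadditive if there is a nonnegative integer $r$ such that $f(q^{k+r}a+b)=f(a)+f(b)$ for all nonnegative integers $a,b,k$ with $0\le b<q^k$; it is $q$-quasimultiplicative if there is a nonnegative integer $r$ such that $f(q^{k+r}a+b)=f(a)f(b)$ for all such $a,b,k$. *)

From mathcomp Require Import all_boot all_algebra.
Set Implicit Arguments. Unset Strict Implicit. Unset Printing Implicit Defensive.
Import GRing.Theory.
Local Open Scope ring_scope.

Definition quasiadditive (R : fieldType) (q : nat) (f : nat -> R) : Prop :=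
  exists r : nat, forall a b k : nat, (b < q ^ k)%N ->
    f (q ^ (k + r) * a + b)%N = f a + f b.

Definition quasimultiplicative (R : fieldType) (q : nat) (f : nat -> R) : Prop :=
  exists r : nat, forall a b k : nat, (b < q ^ k)%N ->
    f (q ^ (k + r) * a + b)%N = f a * f b.

(* Taking
   a = b = 0 pins down f 0.  Writing q^(1+r) a as q^r (q a) and reading the
   equation once with k = 1 for a and once with k = 0 for q a gives
   f(q a) * f 0 = f a * f 0 (resp. with +), so f(q a) = f a once f 0 is
   cancellable; in the multiplicative case f 0 = 0 forces f n = f 0 * f n = 0
   for every n, because n < q^n. *)
From mathcomp Require Import all_boot all_algebra.
Local Open Scope ring_scope.
Import GRing.Theory.

(* Stated in the shape of the functional equation with b = 0 and k = 1, resp. k = 0. *)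
Lemma expnSr_mul (q r a : nat) :
  (q ^ (1 + r) * a + 0 = q ^ (0 + r) * (q * a) + 0)%N.
Proof. by rewrite add0n expnS mulnA (mulnC q). Qed.

Section QuasiFunctions.

Variables (R : fieldType) (q : nat) (f : nat -> R).

Lemma quasiadditive0 : quasiadditive q f -> f 0%N = 0.
Proof.
case=> r hf; apply: (addrI (f 0%N)).
by have := hf 0%N 0%N 0%N isT; rewrite muln0 addn0 addr0 => <-.
Qed.

Lemma quasiadditive_mulq : (0 < q)%N -> quasiadditive q f ->
  forall a : nat, f (q * a)%N = f a.
Proof.
move=> q_gt0 hfa a; have f0 := quasiadditive0 hfa; case: hfa => r hf.
have := hf a 0%N 1%N; rewrite expn1 => /(_ q_gt0).
by rewrite expnSr_mul hf ?expn0 // f0 !addr0.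
Qed.

Lemma quasimultiplicative0 : quasimultiplicative q f ->
  f 0%N = 0 \/ f 0%N = 1.
Proof.
case=> r hf; have := hf 0%N 0%N 0%N isT; rewrite muln0 addn0 => /eqP.
rewrite -subr_eq0 -{1}(mulr1 (f 0%N)) -mulrBr mulf_eq0 subr_eq0 eq_sym.
by case/orP=> /eqP; [left | right].
Qed.

Hypothesis q_gt1 : (1 < q)%N.

Lemma quasimultiplicative_eq0 : quasimultiplicative q f -> f 0%N = 0 ->
  forall n : nat, f n = 0.
Proof.
case=> r hf f0 n; have := hf 0%N n n (ltn_expl n q_gt1).
by rewrite muln0 add0n f0 mul0r.
Qed.

Lemma quasimultiplicative1 : quasimultiplicative q f ->
  (exists n : nat, f n <> 0) -> f 0%N = 1.
Proof.
move=> hfm [n fn_neq0]; case: (quasimultiplicative0 hfm) => // f0.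
by case: fn_neq0; apply: quasimultiplicative_eq0.
Qed.

Lemma quasimultiplicative_mulq : quasimultiplicative q f ->
  forall a : nat, f (q * a)%N = f a.
Proof.
move=> hfm a; case: (quasimultiplicative0 hfm) => f0.
  by rewrite !(quasimultiplicative_eq0 hfm f0).
case: hfm => r hf; have := hf a 0%N 1%N; rewrite expn1 => /(_ (ltnW q_gt1)).
by rewrite expnSr_mul hf ?expn0 // f0 !mulr1.
Qed.

End QuasiFunctions.

Theorem lemma6 (R : fieldType) (q : nat) (hq : (2 <= q)%N) :
  (forall f : nat -> R, quasiadditive q f ->
     f 0%N = 0 /\ (forall a : nat, f (q * a)%N = f a)) /\
  (forall f : nat -> R, quasimultiplicative q f ->
     ((exists n : nat, f n <> 0) -> f 0%N = 1) /\
     (forall a : nat, f (q * a)%N = f a)).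
Proof.
split=> f hf.
- split; first exact: quasiadditive0 hf.
  exact: quasiadditive_mulq (ltnW hq) hf.
- split; first exact: quasimultiplicative1 hq hf.
  exact: quasimultiplicative_mulq hq hf.
Qed.
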